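(* There is a constant $C$ such that for every $n\ge1$ there is a distribution $D$ on $\mathbb{R}_{\ge0}$ such that, when $v_1,\dots,v_n$ are i.i.d. with distribution $D$ (arriving in any order, in particular uniformly random order), every fixed-threshold algorithm (any threshold $\tau$ and any tie probability $\theta\in[0,1]$) has expected value at most $(1-1/e+C/n)\,\mathbb{E}[\max_iv_i]$. One such $D$ takes value $n/(e-1)$ with probability $1/n^2$ and value $(e-2)/(e-1)$ otherwise.
   Context: A fixed-threshold algorithm with threshold $\tau$ and tie probability $\theta$ observes the values in arrival order and gives the (single) item to the first buyer whose value exceeds $\tau$, or equals $\tau$ and wins an independent coin of bias $\theta$; its value is that buyer's value ($0$ if none). *)

From Stdlib Require Import Reals Lra List.
Import ListNotations.
Open Scope R_scope.

(* A finitely supported distribution on R_{>=0}: list of (value, probability). *)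
Definition dist := list (R * R).

Definition is_dist (D : dist) : Prop :=
  Forall (fun vp => 0 <= fst vp /\ 0 <= snd vp) D /\
  fold_right Rplus 0 (map snd D) = 1.

Definition accept_prob (tau theta v : R) : R :=
  if Rlt_dec tau v then 1 else if Req_EM_T v tau then theta else 0.

(* Expected value (over the tie coins) of the fixed-threshold algorithm on
   the values vs listed in arrival order. *)
Fixpoint ft_value (tau theta : R) (vs : list R) : R :=
  match vs with
  | [] => 0
  | v :: vs' => accept_prob tau theta v * v
                + (1 - accept_prob tau theta v) * ft_value tau theta vs'
  end.

(* All n-tuples of support points of D, with their (product) probabilities:
   the law of n i.i.d. samples from D. *)
Fixpoint iid_tuples (D : dist) (n : nat) : list (R * list R) :=
  match n with
  | O => [(1, [])]
  | S m => flat_map (fun vp =>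
             map (fun qt => (snd vp * fst qt, fst vp :: snd qt)) (iid_tuples D m)) D
  end.

Definition iid_expect (D : dist) (n : nat) (f : list R -> R) : R :=
  fold_right Rplus 0 (map (fun qt => fst qt * f (snd qt)) (iid_tuples D n)).

Definition max_list (vs : list R) : R := fold_right Rmax 0 vs.

Definition hard_dist (n : nat) : dist :=
  [ (INR n / (exp 1 - 1), 1 / (INR n ^ 2)) ;
    ((exp 1 - 2) / (exp 1 - 1), 1 - 1 / (INR n ^ 2)) ].

(* For the two-point law, Bernoulli's inequality gives E[max] >= n/(n+1).
   A fixed threshold either rejects the low value, and then earns at most
   n p H = 1/(e-1) < 1 - 1/e, or accepts every high value.  In the latter case,
   if r is the probability of stopping at a given buyer and b the expected
   value collected there, the algorithm earns b (1 - (1-r)^n) / r with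
   b <= p H + r L.  Writing s = n r and (1-r)^n ~ exp(-s), this is at most
   (1 + (e-2) s)(1 - exp(-s)) / ((e-1) s) up to O(1/n), and the tangent-line
   inequality exp(-s) (1 + (e-2) s) >= 1 - s/e (equality at s = 0 and, to
   second order, at s = 1) bounds it by 1 - 1/e. *)

From Stdlib Require Import Reals List Lra Lia.
From Coquelicot Require Import Coquelicot.
(* Imported after Coquelicot, whose metric [dist] would otherwise shadow [Defs.dist]. *)
From Pilot Require Import Defs.
Import ListNotations.
Open Scope R_scope.

Definition sample_expect (D : dist) (g : R -> R) : R :=
  fold_right Rplus 0 (map (fun vp => snd vp * g (fst vp)) D).

Definition total_mass (D : dist) : R := fold_right Rplus 0 (map snd D).

Lemma fold_Rplus_app (l1 l2 : list R) :
  fold_right Rplus 0 (l1 ++ l2) = fold_right Rplus 0 l1 + fold_right Rplus 0 l2.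
Proof. induction l1 as [|x l1 IH]; simpl; [ring | rewrite IH; ring]. Qed.

Lemma iid_expect_S D m f :
  iid_expect D (S m) f = sample_expect D (fun v => iid_expect D m (fun t => f (v :: t))).
Proof.
  unfold iid_expect, sample_expect; cbn [iid_tuples].
  generalize (iid_tuples D m) as T; intro T.
  induction D as [|[v q] D IH]; simpl; [reflexivity|].
  rewrite map_app, fold_Rplus_app, IH; f_equal; clear IH.
  induction T as [|[q' t] T IHT]; simpl; [ring | rewrite IHT; ring].
Qed.

Lemma iid_expect_ext D m f g :
  (forall t, f t = g t) -> iid_expect D m f = iid_expect D m g.
Proof.
  intro Hfg; unfold iid_expect.
  induction (iid_tuples D m) as [|[q t] T IH]; simpl; [ring | rewrite IH, Hfg; ring].
Qed.

Lemma iid_expect_affine D m f c d :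
  iid_expect D m (fun t => c + d * f t)
  = c * iid_expect D m (fun _ => 1) + d * iid_expect D m f.
Proof.
  unfold iid_expect.
  induction (iid_tuples D m) as [|[q t] T IH]; simpl; [ring | rewrite IH; ring].
Qed.

Lemma sample_expect_ext D g h :
  (forall v, g v = h v) -> sample_expect D g = sample_expect D h.
Proof.
  intro Hgh; unfold sample_expect.
  induction D as [|[v q] D IH]; simpl; [ring | rewrite IH, Hgh; ring].
Qed.

Lemma sample_expect_lin D g h c :
  sample_expect D (fun v => g v + c * h v) = sample_expect D g + c * sample_expect D h.
Proof.
  unfold sample_expect.
  induction D as [|[v q] D IH]; simpl; [ring | rewrite IH; ring].
Qed.

Lemma sample_expect_one D : sample_expect D (fun _ => 1) = total_mass D.
Proof.
  unfold sample_expect, total_mass.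
  induction D as [|[v q] D IH]; simpl; [ring | rewrite IH; ring].
Qed.

Section UnitMass.

Variable D : dist.
Hypothesis mass_D : total_mass D = 1.

Lemma iid_expect_one m : iid_expect D m (fun _ => 1) = 1.
Proof.
  induction m as [|m IH].
  - unfold iid_expect; simpl; ring.
  - rewrite iid_expect_S, (sample_expect_ext _ _ (fun _ => 1)), sample_expect_one
      by (intro; apply IH).
    exact mass_D.
Qed.

Variables tau theta : R.

Definition accept_rate : R := sample_expect D (accept_prob tau theta).
Definition accept_gain : R := sample_expect D (fun v => accept_prob tau theta v * v).

Let G m := iid_expect D m (ft_value tau theta).

Lemma ft_expect_S m : G (S m) = accept_gain + (1 - accept_rate) * G m.
Proof.
  unfold G; rewrite iid_expect_S.
  rewrite (sample_expect_ext _ _ (fun v =>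
      (accept_prob tau theta v * v + G m * 1) + (- G m) * accept_prob tau theta v)).
  - rewrite !sample_expect_lin, sample_expect_one, mass_D.
    unfold accept_gain, accept_rate, G; ring.
  - intro v; cbn [ft_value].
    rewrite iid_expect_affine, iid_expect_one; unfold G; ring.
Qed.

Lemma ft_expect_closed m : G m * accept_rate = accept_gain * (1 - (1 - accept_rate) ^ m).
Proof.
  induction m as [|m IH].
  - unfold G, iid_expect; simpl; ring.
  - rewrite ft_expect_S; simpl.
    replace ((accept_gain + (1 - accept_rate) * G m) * accept_rate)
      with (accept_gain * accept_rate + (1 - accept_rate) * (G m * accept_rate)) by ring.
    rewrite IH; ring.
Qed.

Lemma ft_expect_le_linear m :
  0 <= accept_gain -> 0 <= accept_rate <= 1 -> G m <= INR m * accept_gain.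
Proof.
  intros Hgain Hrate.
  enough (0 <= G m <= INR m * accept_gain) by lra.
  induction m as [|m IH].
  - unfold G, iid_expect; simpl; lra.
  - rewrite ft_expect_S, S_INR; nra.
Qed.

End UnitMass.

Definition two_point (H L p : R) : dist := [(H, p); (L, 1 - p)].

Lemma sample_expect_two_point H L p g :
  sample_expect (two_point H L p) g = p * g H + (1 - p) * g L.
Proof. unfold sample_expect; simpl; ring. Qed.

Section TwoPointMax.

Variables H L p : R.
Hypothesis L_range : 0 <= L <= H.

Let D := two_point H L p.
Let F m c := iid_expect D m (fun t => Rmax c (max_list t)).

Lemma running_max_S m c : F (S m) c = p * F m (Rmax c H) + (1 - p) * F m (Rmax c L).
Proof.
  unfold F, D; rewrite iid_expect_S, sample_expect_two_point.
  do 2 f_equal; apply iid_expect_ext; intro t; apply Rmax_assoc.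
Qed.

Lemma running_max_above m c : H <= c -> F m c = c.
Proof.
  intro Hc; induction m as [|m IH].
  - unfold F, iid_expect; simpl; rewrite Rmax_left; lra.
  - rewrite running_max_S, !Rmax_left, IH by lra; ring.
Qed.

Lemma running_max_low m : F m L = H - (H - L) * (1 - p) ^ m.
Proof.
  induction m as [|m IH].
  - unfold F, iid_expect; simpl; rewrite Rmax_left; lra.
  - rewrite running_max_S, Rmax_right, Rmax_left, IH, running_max_above by lra; simpl; ring.
Qed.

Lemma two_point_max_expect m :
  (1 <= m)%nat -> iid_expect D m max_list = H - (H - L) * (1 - p) ^ m.
Proof.
  intro Hm; destruct m as [|m]; [lia|].
  unfold D; rewrite iid_expect_S, sample_expect_two_point.
  change (p * F m H + (1 - p) * F m L = H - (H - L) * (1 - p) ^ S m).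
  rewrite running_max_above, running_max_low by lra; simpl; ring.
Qed.

End TwoPointMax.

Lemma le_of_derive_nonneg (f df : R -> R) a b :
  (forall x, is_derive f x (df x)) -> (forall x, a <= x <= b -> 0 <= df x) ->
  a <= b -> f a <= f b.
Proof.
  intros Hf Hdf Hab.
  destruct (MVT_gen f a b df) as [c [Hc Hmvt]].
  - intros x _; apply Hf.
  - intros x _; apply continuity_pt_filterlim.
    apply (@ex_derive_continuous R_AbsRing R_NormedModule); eexists; apply Hf.
  - rewrite Rmin_left, Rmax_right in Hc by lra.
    pose proof (Hdf c Hc); nra.
Qed.

Lemma le_of_derive_nonpos (f df : R -> R) a b :
  (forall x, is_derive f x (df x)) -> (forall x, a <= x <= b -> df x <= 0) ->
  a <= b -> f b <= f a.
Proof.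
  intros Hf Hdf Hab.
  enough (- f a <= - f b) by lra.
  apply (le_of_derive_nonneg (fun x => - f x) (fun x => - df x)); auto.
  - intro x; apply (is_derive_opp f); apply Hf.
  - intros x Hx; specialize (Hdf x Hx); lra.
Qed.

Lemma exp_ge_taylor3 x : 0 <= x -> 1 + x + x ^ 2 / 2 + x ^ 3 / 6 <= exp x.
Proof.
  intro Hx.
  assert (Htaylor2 : forall y, 0 <= y -> 1 + y + y ^ 2 / 2 <= exp y).
  { intros y Hy.
    enough (exp 0 - (1 + 0 + 0 ^ 2 / 2) <= exp y - (1 + y + y ^ 2 / 2))
      by (rewrite exp_0 in *; lra).
    apply (le_of_derive_nonneg (fun z => exp z - (1 + z + z ^ 2 / 2))
             (fun z => exp z - (1 + z))); auto.
    - intro z; auto_derive; auto; field.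
    - intros z _; pose proof (exp_ineq1_le z); lra. }
  enough (exp 0 - (1 + 0 + 0 ^ 2 / 2 + 0 ^ 3 / 6) <= exp x - (1 + x + x ^ 2 / 2 + x ^ 3 / 6))
    by (rewrite exp_0 in *; lra).
  apply (le_of_derive_nonneg (fun z => exp z - (1 + z + z ^ 2 / 2 + z ^ 3 / 6))
           (fun z => exp z - (1 + z + z ^ 2 / 2))); auto.
  - intro z; auto_derive; auto; field.
  - intros z Hz; pose proof (Htaylor2 z (proj1 Hz)); lra.
Qed.

Lemma exp_mul_INR k x : exp (INR k * x) = exp x ^ k.
Proof.
  induction k as [|k IH]; [simpl; rewrite Rmult_0_l, exp_0; ring|].
  rewrite S_INR, Rmult_plus_distr_r, Rmult_1_l, exp_plus, IH; simpl; ring.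
Qed.

Lemma exp_1_bounds : 8 / 3 <= exp 1 < 3.
Proof.
  split; [pose proof (exp_ge_taylor3 1); lra|].
  (* [exp 1 = exp (1/6) ^ 6 <= (6/5) ^ 6], the case [k = 6] of [exp 1 <= (k/(k-1)) ^ k]. *)
  assert (Hsixth : exp (1 / 6) <= 6 / 5).
  { pose proof (exp_ineq1_le (- (1 / 6))) as Hlow; rewrite exp_Ropp in Hlow.
    pose proof (exp_pos (1 / 6)).
    apply (Rmult_le_reg_r (/ exp (1 / 6))); [apply Rinv_0_lt_compat; lra|].
    rewrite Rinv_r by lra; lra. }
  replace 1 with (INR 6 * (1 / 6)) by (simpl; field).
  rewrite exp_mul_INR.
  apply Rle_lt_trans with ((6 / 5) ^ 6); [| simpl; lra].
  apply pow_incr; split; [apply Rlt_le, exp_pos | exact Hsixth].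
Qed.

Section TangentLine.

Let e := exp 1.
Let k s := 1 + (e - 2) * s - exp s * (1 - s / e).
Let dk s := (e - 2) - exp s * (e - 1 - s) / e.
Let ddk s := exp s * (s + 2 - e) / e.

Let e_range : 8 / 3 <= e < 3 := exp_1_bounds.

Let k_derive s : is_derive k s (dk s).
Proof. unfold k, dk; auto_derive; auto; field; lra. Qed.

Let dk_derive s : is_derive dk s (ddk s).
Proof. unfold dk, ddk; auto_derive; auto; field; lra. Qed.

Let ddk_nonneg s : e - 2 <= s -> 0 <= ddk s.
Proof.
  intro Hs; unfold ddk; pose proof (exp_pos s).
  apply Rdiv_le_0_compat; nra.
Qed.

Let ddk_nonpos s : s <= e - 2 -> ddk s <= 0.
Proof.
  intro Hs; unfold ddk; pose proof (exp_pos s).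
  unfold Rdiv; apply Rmult_le_0_r; [nra | apply Rlt_le, Rinv_0_lt_compat; lra].
Qed.

Let k_0 : k 0 = 0.
Proof. unfold k; rewrite exp_0; field; lra. Qed.

Let k_1 : k 1 = 0.
Proof. unfold k; fold e; field; lra. Qed.

Let dk_1 : dk 1 = 0.
Proof. unfold dk; fold e; field; lra. Qed.

(* [k] is convex on [e - 2, oo) with a double zero at [1]. *)
Let k_nonneg_convex_part s : e - 2 <= s -> 0 <= k s.
Proof.
  intro Hs; destruct (Rle_dec 1 s) as [H1s | Hs1].
  - rewrite <- k_1; apply (le_of_derive_nonneg k dk); auto.
    intros t Ht; rewrite <- dk_1.
    apply (le_of_derive_nonneg dk ddk); auto; [| lra].
    intros x Hx; apply ddk_nonneg; lra.
  - rewrite <- k_1; apply (le_of_derive_nonpos k dk); auto; [| lra].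
    intros t Ht; rewrite <- dk_1.
    apply (le_of_derive_nonneg dk ddk); auto; [| lra].
    intros x Hx; apply ddk_nonneg; lra.
Qed.

(* On [0, e - 2] the function [k] is concave, so it stays above its values at the ends. *)
Let k_nonneg s : 0 <= s -> 0 <= k s.
Proof.
  intro Hs; destruct (Rle_dec (e - 2) s) as [Hes | Hse]; [now apply k_nonneg_convex_part|].
  destruct (Rle_dec 0 (dk s)) as [Hdk | Hdk].
  - rewrite <- k_0; apply (le_of_derive_nonneg k dk); auto.
    intros t Ht; apply Rle_trans with (dk s); auto.
    apply (le_of_derive_nonpos dk ddk); try tauto.
    intros x Hx; apply ddk_nonpos; lra.
  - apply Rle_trans with (k (e - 2)); [apply k_nonneg_convex_part; lra|].
    apply (le_of_derive_nonpos k dk); auto; [| lra].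
    intros t Ht; apply Rle_trans with (dk s); [| lra].
    apply (le_of_derive_nonpos dk ddk); try tauto.
    intros x Hx; apply ddk_nonpos; lra.
Qed.

Lemma exp_neg_mul_affine_ge s :
  0 <= s -> 1 - s / exp 1 <= exp (- s) * (1 + (exp 1 - 2) * s).
Proof.
  intro Hs; pose proof (k_nonneg s Hs) as Hk; unfold k in Hk; fold e.
  rewrite exp_Ropp; pose proof (exp_pos s).
  apply (Rmult_le_reg_l (exp s)); [lra|].
  rewrite <- Rmult_assoc, Rinv_r, Rmult_1_l by lra; lra.
Qed.

End TangentLine.

Lemma pow_one_sub_le_inv p k : 0 < p <= 1 -> (1 - p) ^ k <= 1 / (1 + INR k * p).
Proof.
  intro Hp.
  assert (Hprod : (1 - p) ^ k * (1 + p) ^ k <= 1 ^ k).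
  { rewrite <- Rpow_mult_distr; apply pow_incr; nra. }
  rewrite pow1 in Hprod.
  pose proof (poly k p (proj1 Hp)) as Hbern; pose proof (pos_INR k).
  assert (0 <= (1 - p) ^ k) by (apply pow_le; lra).
  apply (Rmult_le_reg_r (1 + INR k * p)); [nra|].
  replace (1 / (1 + INR k * p) * (1 + INR k * p)) with 1 by (field; nra).
  nra.
Qed.

(* From [1 - r >= exp (- r / (1 - r))] and [r / (1 - r) <= 2 r]. *)
Lemma one_sub_pow_ge_exp r k :
  0 < r <= 1 / 2 -> exp (- (INR k * r)) * (1 - 2 * (INR k * r) * r) <= (1 - r) ^ k.
Proof.
  intro Hr; set (q := r / (1 - r)); pose proof (pos_INR k).
  assert (Hq : 0 < q <= 2 * r).
  { unfold q; split; [apply Rdiv_lt_0_compat; lra|].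
    apply (Rmult_le_reg_r (1 - r)); [lra|].
    unfold Rdiv; rewrite Rmult_assoc, Rinv_l by lra; nra. }
  assert (Hstep : exp (- q) <= 1 - r).
  { rewrite exp_Ropp, <- (Rinv_inv (1 - r)).
    pose proof (exp_ineq1_le q).
    apply Rinv_le_contravar; [apply Rinv_0_lt_compat; lra|].
    replace (/ (1 - r)) with (1 + q) by (unfold q; field; lra); lra. }
  apply Rle_trans with (exp (- q) ^ k); [| apply pow_incr; pose proof (exp_pos (- q)); lra].
  rewrite <- exp_mul_INR.
  replace (INR k * - q) with (- (INR k * r) + - (INR k * r * q)) by (unfold q; field; lra).
  rewrite exp_plus; apply Rmult_le_compat_l; [apply Rlt_le, exp_pos|].
  pose proof (exp_ineq1_le (- (INR k * r * q))).
  assert (0 <= INR k * r) by (apply Rmult_le_pos; lra).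
  assert (INR k * r * q <= INR k * r * (2 * r)) by (apply Rmult_le_compat_l; lra).
  lra.
Qed.

Lemma affine_mul_exp_neg_le c s :
  0 <= c <= 1 -> 0 <= s -> (1 + c * s) * (s * exp (- s)) <= 5.
Proof.
  intros Hc Hs; rewrite exp_Ropp; pose proof (exp_pos s).
  assert (Hs1 : s <= exp s) by (pose proof (exp_ineq1_le s); lra).
  assert (Hs2 : s ^ 2 <= 4 * exp s).
  { replace (exp s) with (exp (s / 2) * exp (s / 2)) by (rewrite <- exp_plus; f_equal; field).
    pose proof (exp_ineq1_le (s / 2)); nra. }
  replace ((1 + c * s) * (s * / exp s)) with ((s + c * s ^ 2) / exp s) by (field; lra).
  apply (Rmult_le_reg_r (exp s)); [lra|].
  unfold Rdiv; rewrite Rmult_assoc, Rinv_l by lra; nra.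
Qed.

(* The bound on [b] is [b <= p H + r L] for the hard distribution, scaled by [(e - 1) n]. *)
Lemma threshold_gain_le n r b :
  (1 <= n)%nat -> 0 < r <= 1 -> 0 <= b ->
  b * ((exp 1 - 1) * INR n) <= 1 + (exp 1 - 2) * (INR n * r) ->
  b * (1 - (1 - r) ^ n) <= r * (1 - 1 / exp 1 + 10 / INR n).
Proof.
  intros Hn Hr Hb Hbound.
  pose proof exp_1_bounds as He; set (e := exp 1) in *.
  assert (HN : 1 <= INR n) by (apply (le_INR 1) in Hn; exact Hn).
  set (N := INR n) in *; set (s := N * r) in *.
  set (Y := (1 - r) ^ n).
  assert (HY : 0 <= Y <= 1).
  { unfold Y; split; [apply pow_le; lra|].
    apply Rle_trans with (1 ^ n); [apply pow_incr; lra | rewrite pow1; lra]. }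
  apply (Rmult_le_reg_r ((e - 1) * N)); [nra|].
  replace (r * (1 - 1 / e + 10 / N) * ((e - 1) * N))
    with (s * ((e - 1) ^ 2 / e) + r * (10 * (e - 1))) by (unfold s; field; lra).
  apply Rle_trans with ((1 + (e - 2) * s) * (1 - Y)).
  { replace (b * (1 - Y) * ((e - 1) * N)) with (b * ((e - 1) * N) * (1 - Y)) by ring.
    apply Rmult_le_compat_r; lra. }
  assert (Hs : 0 <= s) by (unfold s; nra).
  destruct (Rle_dec (1 / 2) r) as [Hbig | Hsmall].
  - assert (Hcoef : (e - 2) <= (e - 1) ^ 2 / e)
      by (apply (Rmult_le_reg_r e); [lra|]; field_simplify; nra).
    assert (1 <= r * (10 * (e - 1))) by nra.
    assert ((e - 2) * s <= s * ((e - 1) ^ 2 / e)) by nra.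
    assert (0 <= (1 + (e - 2) * s) * Y) by (apply Rmult_le_pos; nra).
    lra.
  - set (u := exp (- s)).
    assert (HYu : u * (1 - 2 * s * r) <= Y)
      by (apply (one_sub_pow_ge_exp r n); lra).
    assert (Htangent : 1 - s / e <= u * (1 + (e - 2) * s))
      by (apply exp_neg_mul_affine_ge; exact Hs).
    assert (Herror : (1 + (e - 2) * s) * (s * u) <= 5)
      by (apply affine_mul_exp_neg_le; lra).
    assert (Hpos : 0 <= 1 + (e - 2) * s) by nra.
    apply Rle_trans with ((1 + (e - 2) * s) * (1 - u) + 2 * r * ((1 + (e - 2) * s) * (s * u))).
    { replace ((1 + (e - 2) * s) * (1 - u) + 2 * r * ((1 + (e - 2) * s) * (s * u)))
        with ((1 + (e - 2) * s) * (1 - u * (1 - 2 * s * r))) by ring.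
      apply Rmult_le_compat_l; lra. }
    replace (s * ((e - 1) ^ 2 / e)) with ((1 + (e - 2) * s) - (1 - s / e)) by (field; lra).
    nra.
Qed.

Lemma accept_prob_range tau theta v : 0 <= theta <= 1 -> 0 <= accept_prob tau theta v <= 1.
Proof.
  intro Htheta; unfold accept_prob.
  destruct (Rlt_dec tau v); [lra|]; destruct (Req_EM_T v tau); lra.
Qed.

Lemma accept_prob_eq_1 tau theta v w :
  v < w -> 0 < accept_prob tau theta v -> accept_prob tau theta w = 1.
Proof.
  unfold accept_prob; intros Hvw Hv.
  destruct (Rlt_dec tau w); [reflexivity|].
  destruct (Rlt_dec tau v); [lra|]; destruct (Req_EM_T v tau); lra.
Qed.

Lemma total_mass_two_point H L p : total_mass (two_point H L p) = 1.
Proof. unfold total_mass; simpl; ring. Qed.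

Section HardInstance.

Variable n : nat.
Hypothesis n_pos : (1 <= n)%nat.

Let e := exp 1.
Let N := INR n.
Let H := N / (e - 1).
Let L := (e - 2) / (e - 1).
Let p := 1 / N ^ 2.

Let hard_dist_eq : hard_dist n = two_point H L p := eq_refl.
Let e_range : 8 / 3 <= e < 3 := exp_1_bounds.

Let N_ge_1 : 1 <= N.
Proof. apply (le_INR 1); exact n_pos. Qed.

Let p_range : 0 < p <= 1.
Proof.
  pose proof N_ge_1; unfold p; split; [apply Rdiv_lt_0_compat; nra|].
  apply (Rmult_le_reg_r (N ^ 2)); [nra|]; field_simplify; nra.
Qed.

Let L_range : 0 <= L <= 1 - 1 / e.
Proof.
  unfold L; split; [apply Rdiv_le_0_compat; lra|].
  apply (Rmult_le_reg_r (e * (e - 1))); [nra|]; field_simplify; nra.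
Qed.

Let L_lt_H : L < H.
Proof.
  pose proof N_ge_1; unfold L, H, Rdiv.
  apply Rmult_lt_compat_r; [apply Rinv_0_lt_compat |]; lra.
Qed.

Let pH_scaled : p * H * ((e - 1) * N) = 1.
Proof. pose proof N_ge_1; unfold p, H; field; lra. Qed.

Lemma hard_dist_is_dist : is_dist (hard_dist n).
Proof.
  rewrite hard_dist_eq; split.
  - pose proof N_ge_1; pose proof p_range; pose proof L_range; pose proof L_lt_H.
    repeat apply Forall_cons; try apply Forall_nil; cbn [fst snd]; lra.
  - apply total_mass_two_point.
Qed.

Lemma hard_max_expect_ge : N / (N + 1) <= iid_expect (hard_dist n) n max_list.
Proof.
  pose proof N_ge_1; pose proof L_range; pose proof L_lt_H.
  rewrite hard_dist_eq, two_point_max_expect by (exact n_pos || lra).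
  pose proof (pow_one_sub_le_inv p n p_range) as Hpow; fold N in Hpow.
  replace (1 / (1 + N * p)) with (N / (N + 1)) in Hpow by (unfold p; field; lra).
  apply Rle_trans with (H - (H - L) * (N / (N + 1))).
  - right; unfold H, L; field; lra.
  - apply Rplus_le_compat_l, Ropp_le_contravar, Rmult_le_compat_l; lra.
Qed.

Variables tau theta : R.
Hypothesis theta_range : 0 <= theta <= 1.

Let AH := accept_prob tau theta H.
Let AL := accept_prob tau theta L.
Let rate := accept_rate (two_point H L p) tau theta.
Let gain := accept_gain (two_point H L p) tau theta.
Let ft_expect := iid_expect (two_point H L p) n (ft_value tau theta).

Let rate_eq : rate = p * AH + (1 - p) * AL :=
  sample_expect_two_point H L p (accept_prob tau theta).
Let gain_eq : gain = p * (AH * H) + (1 - p) * (AL * L) :=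
  sample_expect_two_point H L p (fun v => accept_prob tau theta v * v).

Let ft_expect_reject_low : AL = 0 -> ft_expect <= 1 - 1 / e + 10 / N.
Proof.
  intro HAL0; pose proof N_ge_1; pose proof p_range; pose proof L_lt_H; pose proof L_range.
  pose proof (accept_prob_range tau theta H theta_range) as HAH; fold AH in HAH.
  assert (0 <= AH * H) by (apply Rmult_le_pos; lra).
  apply Rle_trans with (N * gain).
  { apply ft_expect_le_linear; [apply total_mass_two_point | fold gain | fold rate];
      [rewrite gain_eq | rewrite rate_eq]; rewrite HAL0; nra. }
  apply Rle_trans with (1 / (e - 1)).
  - rewrite gain_eq, HAL0; apply (Rmult_le_reg_r (e - 1)); [lra|].
    replace (1 / (e - 1) * (e - 1)) with (p * H * ((e - 1) * N)) by (rewrite pH_scaled; field; lra).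
    nra.
  - assert (0 <= 10 / N) by (apply Rdiv_le_0_compat; lra).
    enough (1 / (e - 1) <= 1 - 1 / e) by lra.
    apply (Rmult_le_reg_r (e * (e - 1))); [nra|]; field_simplify; nra.
Qed.

Let ft_expect_accept_low : 0 < AL -> ft_expect <= 1 - 1 / e + 10 / N.
Proof.
  intro HALpos; pose proof N_ge_1; pose proof p_range; pose proof L_range.
  pose proof (accept_prob_range tau theta L theta_range) as HAL; fold AL in HAL.
  assert (HAH1 : AH = 1) by (apply (accept_prob_eq_1 tau theta L H); [apply L_lt_H | exact HALpos]).
  assert (Hrate : p <= rate <= 1) by (rewrite rate_eq, HAH1; nra).
  assert (0 <= AL * L) by (apply Rmult_le_pos; lra).
  assert (Hgain : gain <= p * H + rate * L) by (rewrite gain_eq, rate_eq, HAH1; nra).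
  pose proof (ft_expect_closed _ (total_mass_two_point H L p) tau theta n) as Hclosed.
  cbv beta in Hclosed; fold rate gain ft_expect in Hclosed.
  apply (Rmult_le_reg_r rate); [lra|].
  rewrite Hclosed, (Rmult_comm _ rate).
  apply threshold_gain_le; [exact n_pos | lra | rewrite gain_eq, HAH1; nra |].
  apply Rle_trans with ((p * H + rate * L) * ((e - 1) * N)); [apply Rmult_le_compat_r; nra|].
  rewrite Rmult_plus_distr_r, pH_scaled; right; fold e N; unfold L; field; lra.
Qed.

Lemma hard_ft_expect_le :
  iid_expect (hard_dist n) n (ft_value tau theta) <= 1 - 1 / e + 10 / N.
Proof.
  rewrite hard_dist_eq; fold ft_expect.
  destruct (proj1 (accept_prob_range tau theta L theta_range)) as [HALpos | HAL0].
  - now apply ft_expect_accept_low.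
  - now apply ft_expect_reject_low.
Qed.

End HardInstance.

Theorem theorem5 :
  exists C : R, forall n : nat, (1 <= n)%nat ->
    is_dist (hard_dist n) /\
    forall tau theta : R, 0 <= theta <= 1 ->
      iid_expect (hard_dist n) n (ft_value tau theta)
        <= (1 - 1 / exp 1 + C / INR n) * iid_expect (hard_dist n) n max_list.
Proof.
  exists 21; intros n Hn; split; [now apply hard_dist_is_dist|].
  intros tau theta Htheta.
  pose proof (hard_ft_expect_le n Hn tau theta Htheta) as Hft.
  pose proof (hard_max_expect_ge n Hn) as Hmax.
  pose proof exp_1_bounds as He.
  assert (HN : 1 <= INR n) by (apply (le_INR 1) in Hn; exact Hn).
  set (e := exp 1) in *; set (N := INR n) in *.
  assert (He1 : 0 <= 1 / e <= 1)
    by (split; [apply Rdiv_le_0_compat | apply (Rmult_le_reg_r e); [| field_simplify]]; lra).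
  assert (HC : 0 <= 21 / N) by (apply Rdiv_le_0_compat; lra).
  assert (H10 : 10 / N <= 10) by (apply (Rmult_le_reg_r N); [| field_simplify]; lra).
  apply Rle_trans with ((1 - 1 / e + 21 / N) * (N / (N + 1))).
  - (* The loss from [E[max] >= N / (N + 1)] is absorbed by the larger constant. *)
    assert (Hslack : (1 - 1 / e + 21 / N) * (N / (N + 1)) - (1 - 1 / e + 10 / N)
                     = (11 - (1 - 1 / e) - 10 / N) / (N + 1)) by (field; lra).
    assert (0 <= (11 - (1 - 1 / e) - 10 / N) / (N + 1)) by (apply Rdiv_le_0_compat; lra).
    lra.
  - apply Rmult_le_compat_l; lra.
Qed.
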